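(* Let $(\mathcal U,\mathcal D)$ be a metric space, $\mathcal R\subseteq\mathcal U$ a finite dataset, $\delta>0$, and $a_1,\dots,a_n\in\mathcal U$. For $o\in\mathcal U$ let $o^n=(\mathcal D(a_1,o),\dots,\mathcal D(a_n,o))\in\mathbb{R}^n$. Let $\mathcal B_1,\dots,\mathcal B_p\subseteq\mathbb{R}^n$ be boxes $\mathcal B_i=\prod_{d=1}^n[\mathcal B_i^{\bot}[d],\mathcal B_i^{\top}[d]]$, and define the kernel partitions $\mathcal V_i=\{o\in\mathcal R: o^n\in\mathcal B_i\}$ and the whole partitions $$\mathcal W_i=\Big\{o\in\mathcal R:\ o^n\in\prod_{d=1}^n\big[\mathcal B_i^{\bot}[d]-\delta,\ \mathcal B_i^{\top}[d]+\delta\big]\Big\}.$$ Assume the kernel partitions are pairwise disjoint and $\bigcup_{i=1}^p\mathcal V_i=\mathcal R$. Then for any two objects $o_x,o_y\in\mathcal R$ with $\mathcal D(o_x,o_y)<\delta$, there exists $k\in\{1,\dots,p\}$ such that $o_x\in\mathcal V_k$ and $o_y\in\mathcal W_k$.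
   Context: The points $a_1,\dots,a_n$ are ''dimensional pivots'' used to map objects into the Euclidean target space $\mathbb{R}^n$; the boxes $\mathcal B_i$ are the areas obtained by partitioning that target space. A metric $\mathcal D$ satisfies non-negativity, $\mathcal D(x,y)=0$ iff $x=y$, symmetry and the triangle inequality. *)

From Stdlib Require Import Reals List.
Open Scope R_scope.

Definition is_metric {U : Type} (D : U -> U -> R) : Prop :=
  (forall x y, 0 <= D x y) /\
  (forall x y, D x y = 0 <-> x = y) /\
  (forall x y, D x y = D y x) /\
  (forall x y z, D x z <= D x y + D y z).

Definition finite_set {U : Type} (S : U -> Prop) : Prop :=
  exists l : list U, forall x, S x <-> In x l.

(* o^n : the pivot-space image, coordinates indexed by d = 0..n-1 (pivot a d). *)
Definition embed {U : Type} (D : U -> U -> R) (a : nat -> U) (o : U) : nat -> R :=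
  fun d => D (a d) o.

Definition in_box (n : nat) (lo hi : nat -> R) (e : R) (v : nat -> R) : Prop :=
  forall d, (d < n)%nat -> lo d - e <= v d <= hi d + e.

(* Kernel partition V_i (boxes indexed i = 0..p-1, bounds Blo i d, Bhi i d). *)
Definition kernel_part {U : Type} (D : U -> U -> R) (Rs : U -> Prop) (n : nat)
  (a : nat -> U) (Blo Bhi : nat -> nat -> R) (i : nat) (o : U) : Prop :=
  Rs o /\ in_box n (Blo i) (Bhi i) 0 (embed D a o).

Definition whole_part {U : Type} (D : U -> U -> R) (Rs : U -> Prop) (n : nat)
  (a : nat -> U) (Blo Bhi : nat -> nat -> R) (delta : R) (i : nat) (o : U) : Prop :=
  Rs o /\ in_box n (Blo i) (Bhi i) delta (embed D a o).

(* Each pivot coordinate o |-> D(a_d, o) is 1-Lipschitz by the triangle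
   inequality, so moving from o_x to o_y (closer than delta) shifts every
   coordinate by less than delta.  Hence o_y lies in the delta-enlargement of
   the kernel box that contains o_x; only the covering hypothesis is needed,
   not disjointness or finiteness. *)
From Stdlib Require Import Reals List Lra.
Open Scope R_scope.

Lemma metric_dist_diff_le {U : Type} (D : U -> U -> R) :
  is_metric D -> forall a x y, Rabs (D a x - D a y) <= D x y.
Proof.
  intros [_ [_ [Hsym Htri]]] a x y.
  pose proof (Htri a x y); pose proof (Htri a y x); pose proof (Hsym x y).
  apply Rabs_le; lra.
Qed.

Lemma embed_dist_le {U : Type} (D : U -> U -> R) (a : nat -> U) :
  is_metric D -> forall x y d, Rabs (embed D a x d - embed D a y d) <= D x y.
Proof. intros HD x y d; exact (metric_dist_diff_le D HD (a d) x y). Qed.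

Lemma in_box_widen (n : nat) (lo hi : nat -> R) (e : R) (u v : nat -> R) :
  in_box n lo hi 0 u ->
  (forall d, (d < n)%nat -> Rabs (u d - v d) <= e) ->
  in_box n lo hi e v.
Proof.
  intros Hu Huv d Hd.
  specialize (Hu d Hd); specialize (Huv d Hd).
  pose proof (Rle_abs (u d - v d)) as Hle.
  pose proof (Rle_abs (- (u d - v d))) as Hge; rewrite Rabs_Ropp in Hge.
  lra.
Qed.

Theorem lemma4 (U : Type) (D : U -> U -> R) (Rs : U -> Prop) (delta : R)
  (n : nat) (a : nat -> U) (p : nat) (Blo Bhi : nat -> nat -> R) :
  is_metric D ->
  finite_set Rs ->
  0 < delta ->
  (forall i j o, (i < p)%nat -> (j < p)%nat -> i <> j ->
     ~ (kernel_part D Rs n a Blo Bhi i o /\ kernel_part D Rs n a Blo Bhi j o)) ->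
  (forall o, Rs o <-> exists i, (i < p)%nat /\ kernel_part D Rs n a Blo Bhi i o) ->
  forall ox oy, Rs ox -> Rs oy -> D ox oy < delta ->
  exists k, (k < p)%nat /\ kernel_part D Rs n a Blo Bhi k ox /\
            whole_part D Rs n a Blo Bhi delta k oy.
Proof.
  intros HD _ _ _ Hcover ox oy Hx Hy Hxy.
  destruct (proj1 (Hcover ox) Hx) as [k [Hk Hkx]].
  exists k; split; [exact Hk | split; [exact Hkx | split; [exact Hy |]]].
  apply in_box_widen with (embed D a ox); [apply Hkx |].
  intros d _.
  pose proof (embed_dist_le D a HD ox oy d); lra.
Qed.
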